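(* Let $[x^{(1)}_k]$ and $[x^{(2)}_k]$ be two zero-mean nonsingular Gaussian Markov sequences over $[0,N]$ that share the same reciprocal model. Then they share the same Markov model if and only if $(R^0_N)^{(1)}=(R^0_N)^{(2)}$, where $(R^0_N)^{(i)}$ is the coefficient $R^0_N$ of the (first-type) reciprocal boundary condition of the $i$-th sequence; equivalently, if and only if $M^{(1)}_N=M^{(2)}_N$.
   Context: $[0,N]=(0,1,\ldots,N)$; $x=[x_0',\ldots,x_N']'$, $C=\mathrm{Cov}(x)$, $'$ denotes transpose; $A_k$ denotes the $(k,k)$ block and $B_k$ the $(k,k+1)$ block of $C^{-1}$. Markov model: a zero-mean nonsingular Gaussian Markov sequence obeys $x_k=M_{k,k-1}x_{k-1}+e^M_k$, $k\in[1,N]$, $x_0=e^M_0$, with $[e^M_k]$ zero-mean white Gaussian, $M_k=\mathrm{Cov}(e^M_k)$; two sequences share the same Markov model if $M_{k,k-1}$ and $M_k$, $k\in[1,N]$, coincide (equivalently their $C^{-1}$ have the same $A_1,\ldots,A_N,B_0,\ldots,B_{N-1}$). Reciprocal model with first-type boundary condition: $R^0_kx_k-R^-_kx_{k-1}-R^+_kx_{k+1}=e^R_k$ for $k\in[1,N-1]$, together with $R^0_0x_0-R^-_0x_N-R^+_0x_1=e^R_0$ and $R^0_Nx_N-R^-_Nx_{N-1}-R^+_Nx_0=e^R_N$, whose coefficients are given by $C^{-1}$: $R^0_k=A_k$ for $k\in[0,N]$, $R^+_k=(R^-_{k+1})'=-B_k$ for $k\in[0,N-1]$, $R^-_0=(R^+_N)'=-D_0$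 where $D_0$ is the $(0,N)$ block. Two sequences share the same reciprocal model if $R^0_k,R^-_k,R^+_k$ for $k\in[1,N-1]$ coincide (equivalently same $A_1,\ldots,A_{N-1},B_0,\ldots,B_{N-1}$). *)

From HB Require Import structures.
From mathcomp Require Import all_boot all_order all_algebra.
Set Implicit Arguments. Unset Strict Implicit. Unset Printing Implicit Defensive.
Import Order.TTheory GRing.Theory Num.Theory.
Local Open Scope ring_scope.

(* A zero-mean Gaussian sequence x = [x_0', ..., x_N']' with x_k in R^d is
   determined by its covariance C : 'M_((N+1)*d); the (k,l) block of a
   (N+1)d x (N+1)d matrix is extracted through mxvec_index. *)

Section Defs.
Variable R : realFieldType.

(* symmetric positive definite (nonsingular covariance) *)
Definition posdef n (A : 'M[R]_n) : Prop :=
  A^T = A /\ forall v : 'rV[R]_n, v != 0 -> 0 < (v *m A *m v^T) 0 0.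

Variables N d : nat.

Definition blk (A : 'M[R]_(N.+1 * d)) (k l : 'I_N.+1) : 'M[R]_d :=
  \matrix_(i < d, j < d) A (mxvec_index k i) (mxvec_index l j).

Definition Ablk (C : 'M[R]_(N.+1 * d)) (k : nat) : 'M[R]_d :=
  blk (invmx C) (inord k) (inord k).
Definition Bblk (C : 'M[R]_(N.+1 * d)) (k : nat) : 'M[R]_d :=
  blk (invmx C) (inord k) (inord k.+1).

Definition R0 (C : 'M[R]_(N.+1 * d)) (k : nat) : 'M[R]_d := Ablk C k.
Definition Rplus (C : 'M[R]_(N.+1 * d)) (k : nat) : 'M[R]_d := - Bblk C k.
Definition Rminus (C : 'M[R]_(N.+1 * d)) (k : nat) : 'M[R]_d := - (Bblk C k.-1)^T.

(* Markov model x_k = M_{k,k-1} x_{k-1} + e_k (k in [1,N]), x_0 = e_0, with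
   e = G x white with Cov(e_k) = M_k.  Here e_k = sum_j gM Mt k j x_j. *)
Definition gM (Mt : nat -> 'M[R]_d) (k j : 'I_N.+1) : 'M[R]_d :=
  if j == k then 1%:M
  else if (0 < (k : nat))%N && ((j : nat) == (k : nat).-1) then - Mt (k : nat)
  else 0.

(* Cov(e_k, e_l) = sum_i sum_j G_ki C_ij G_lj' = (k == l) M_k *)
Definition markov_model (C : 'M[R]_(N.+1 * d)) (Mt Mc : nat -> 'M[R]_d) : Prop :=
  forall k l : 'I_N.+1,
    \sum_(i < N.+1) \sum_(j < N.+1) (gM Mt k i *m blk C i j *m (gM Mt l j)^T)
    = if k == l then Mc (k : nat) else 0.

Definition same_markov (Mt1 Mc1 Mt2 Mc2 : nat -> 'M[R]_d) : Prop :=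
  forall k : nat, (1 <= k <= N)%N -> Mt1 k = Mt2 k /\ Mc1 k = Mc2 k.

Definition same_reciprocal (C1 C2 : 'M[R]_(N.+1 * d)) : Prop :=
  forall k : nat, (1 <= k <= N.-1)%N ->
    [/\ R0 C1 k = R0 C2 k, Rminus C1 k = Rminus C2 k & Rplus C1 k = Rplus C2 k].

End Defs.

From HB Require Import structures.
From mathcomp Require Import all_boot all_order all_algebra.
From mathcomp Require Import zify.
Set Implicit Arguments. Unset Strict Implicit. Unset Printing Implicit Defensive.
Import Order.TTheory GRing.Theory Num.Theory.
Local Open Scope ring_scope.

(** The Markov model says that e = G x is white, where G is block unit lower
   bidiagonal with subdiagonal blocks -M_{k,k-1}; that is, G C G' = diag(M_k).
   Hence C^{-1} = G' diag(M_k^{-1}) G, whose blocks are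
   A_k = M_k^{-1} + M_{k+1,k}' M_{k+1}^{-1} M_{k+1,k} for k < N,
   A_N = M_N^{-1} and B_k = -M_{k+1,k}' M_{k+1}^{-1}.
   A common reciprocal model fixes every B_k and A_1, ..., A_{N-1}.  Once M_N
   (equivalently R^0_N = A_N) is fixed as well, B_{N-1} determines M_{N,N-1},
   then A_{N-1} determines M_{N-1}, and so on down to M_1 and M_{1,0}. *)

Section BlockMatrices.
Variables (R : realFieldType) (N d : nat).
Local Notation MM := 'M[R]_(N.+1 * d).

Definition unidx (p : 'I_(N.+1 * d)) : 'I_N.+1 * 'I_d :=
  enum_val (cast_ord (esym (mxvec_cast N.+1 d)) p).

Lemma mxvec_indexK (k : 'I_N.+1) (i : 'I_d) : unidx (mxvec_index k i) = (k, i).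
Proof. by rewrite /unidx /mxvec_index cast_ordK enum_rankK. Qed.

Lemma unidxK p : mxvec_index (unidx p).1 (unidx p).2 = p.
Proof. by case/mxvec_indexP: p => k i; rewrite mxvec_indexK. Qed.

Lemma big_mxvec_index (V : nmodType) (F : 'I_(N.+1 * d) -> V) :
  \sum_p F p = \sum_(k < N.+1) \sum_(i < d) F (mxvec_index k i).
Proof.
rewrite pair_bigA (reindex (fun p : 'I_N.+1 * 'I_d => mxvec_index p.1 p.2)) //.
by exists unidx => [[k i] _ | p _] /=; rewrite ?mxvec_indexK ?unidxK.
Qed.

Lemma blk_inj (A B : MM) : (forall k l, blk A k l = blk B k l) -> A = B.
Proof.
move=> eq_blk; apply/matrixP => p q; rewrite -(unidxK p) -(unidxK q).
by have /matrixP/(_ (unidx p).2 (unidx q).2) := eq_blk (unidx p).1 (unidx q).1;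
  rewrite !mxE.
Qed.

Lemma blk_mul (A B : MM) k l :
  blk (A *m B) k l = \sum_m blk A k m *m blk B m l.
Proof.
apply/matrixP => i j; rewrite !mxE summxE big_mxvec_index.
by apply: eq_bigr => m _; rewrite !mxE; apply: eq_bigr => r _; rewrite !mxE.
Qed.

Lemma blk_tr (A : MM) k l : blk A^T k l = (blk A l k)^T.
Proof. by apply/matrixP => i j; rewrite !mxE. Qed.

Lemma blk1 k l : blk (1%:M : MM) k l = if k == l then 1%:M else 0.
Proof.
apply/matrixP => i j; rewrite !mxE.
have -> : (mxvec_index k i == mxvec_index l j) = (k == l) && (i == j).
  apply/eqP/andP => [eq_idx | [/eqP-> /eqP->]] //.
  by have := congr1 unidx eq_idx; rewrite !mxvec_indexK => -[-> ->].
by case: (k == l); rewrite ?mxE ?andbF.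
Qed.

Definition blkmx (F : 'I_N.+1 -> 'I_N.+1 -> 'M[R]_d) : MM :=
  \matrix_(p, q) F (unidx p).1 (unidx q).1 (unidx p).2 (unidx q).2.

Lemma blk_blkmx F k l : blk (blkmx F) k l = F k l.
Proof. by apply/matrixP => i j; rewrite !mxE !mxvec_indexK. Qed.

Definition bdiag (F : 'I_N.+1 -> 'M[R]_d) : MM :=
  blkmx (fun k l => if k == l then F k else 0).

Lemma bdiag_mul F H : bdiag F *m bdiag H = bdiag (fun k => F k *m H k).
Proof.
apply: blk_inj => k l; rewrite blk_mul (bigD1 k) //= big1 => [|m /negbTE mk].
  by rewrite !blk_blkmx eqxx addr0; case: eqP; rewrite ?mulmx0.
by rewrite blk_blkmx eq_sym mk mul0mx.
Qed.

Lemma bdiag_mulV F :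
  (forall k, F k \in unitmx) -> bdiag (fun k => invmx (F k)) *m bdiag F = 1%:M.
Proof.
move=> F_unit; rewrite bdiag_mul; apply: blk_inj => k l.
by rewrite blk_blkmx blk1; case: eqP => // _; rewrite mulVmx.
Qed.

Lemma blk_trmx_bdiag_mul (G : MM) F a b :
  blk (G^T *m bdiag F *m G) a b = \sum_m (blk G m a)^T *m F m *m blk G m b.
Proof.
rewrite blk_mul; apply: eq_bigr => m _; rewrite blk_mul (bigD1 m) //=.
rewrite big1 => [|l /negbTE lm]; last by rewrite blk_blkmx lm mulmx0.
by rewrite blk_tr blk_blkmx eqxx addr0.
Qed.

Definition rblk (w : 'rV[R]_(N.+1 * d)) (k : 'I_N.+1) : 'rV[R]_d :=
  \row_i w 0 (mxvec_index k i).

Definition emb (k : 'I_N.+1) (v : 'rV[R]_d) : 'rV[R]_(N.+1 * d) :=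
  \row_p (if (unidx p).1 == k then v 0 (unidx p).2 else 0).

Lemma rblk_emb_mul k v (A : MM) l : rblk (emb k v *m A) l = v *m blk A k l.
Proof.
apply/rowP => j; rewrite !mxE big_mxvec_index (bigD1 k) //=.
rewrite [X in _ + X]big1 => [|m /negbTE mk]; last first.
  by apply: big1 => i _; rewrite !mxE mxvec_indexK mk mul0r.
by rewrite addr0; apply: eq_bigr => i _; rewrite !mxE mxvec_indexK eqxx.
Qed.

Lemma quad_emb k v (A : MM) :
  (emb k v *m A *m (emb k v)^T) 0 0 = (v *m blk A k k *m v^T) 0 0.
Proof.
rewrite !mxE big_mxvec_index (bigD1 k) //=.
rewrite [X in _ + X]big1 => [|m /negbTE mk]; last first.
  by apply: big1 => i _; rewrite !mxE mxvec_indexK mk mulr0.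
rewrite addr0; apply: eq_bigr => i _.
have /rowP/(_ i) := rblk_emb_mul k v A k.
by rewrite !mxE mxvec_indexK eqxx => ->.
Qed.

Lemma posdef_congr_blk_unit (C G : MM) k :
  posdef C -> blk G k k = 1%:M -> blk (G *m C *m G^T) k k \in unitmx.
Proof.
move=> [_ C_pos] Gkk; rewrite unitmxE unitfE; apply/negP => /det0P[v v_neq0 vD].
have x_neq0 : emb k v *m G != 0.
  apply: contra v_neq0 => /eqP x0; have := rblk_emb_mul k v G k.
  by rewrite x0 Gkk mulmx1 => <-; apply/eqP/rowP => i; rewrite !mxE.
have := C_pos _ x_neq0.
have -> : emb k v *m G *m C *m (emb k v *m G)^T =
          emb k v *m (G *m C *m G^T) *m (emb k v)^T by rewrite trmx_mul !mulmxA.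
by rewrite quad_emb vD mul0mx mxE ltxx.
Qed.

End BlockMatrices.

Lemma invmx_congr (R : fieldType) n (C G D E : 'M[R]_n) :
  G *m C *m G^T = D -> E *m D = 1%:M -> invmx C = G^T *m E *m G.
Proof.
move=> GCG ED; have YC : G^T *m E *m G *m C = 1%:M.
  by rewrite -!mulmxA; apply: mulmx1C; rewrite -ED -GCG !mulmxA.
have [_ C_unit] := mulmx1_unit YC.
by rewrite -[LHS]mul1mx -YC mulmxK.
Qed.

Section MarkovModel.
Variables (R : realFieldType) (N d : nat).
Local Notation MM := 'M[R]_(N.+1 * d).

Section Innovation.
Variable Mt : nat -> 'M[R]_d.

Lemma gME (k j : 'I_N.+1) :
  gM Mt k j = if (j : nat) == k then 1%:M
              else if (k : nat) == j.+1 then - Mt k else 0.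
Proof.
rewrite /gM val_eqE; case: (j == k) => //.
by case: k => [[|k] ?] //=; rewrite eqSS eq_sym.
Qed.

Lemma gM_quad (X : 'M[R]_d) (m a : 'I_N.+1) :
  (gM Mt m a)^T *m X *m gM Mt m a =
  (if (m : nat) == a then X else 0) +
  (if (m : nat) == a.+1 then (Mt m)^T *m X *m Mt m else 0).
Proof.
rewrite !gME; have [<- | _] := eqVneq (a : nat) m.
  by rewrite (ltn_eqF (ltnSn _)) trmx1 mul1mx mulmx1 addr0.
rewrite add0r; case: eqP => _; last by rewrite mulmx0.
by rewrite mulmxN linearN /= !mulNmx opprK.
Qed.

Lemma gM_cross (X : 'M[R]_d) (m a b : 'I_N.+1) : (b : nat) = a.+1 ->
  (gM Mt m a)^T *m X *m gM Mt m b =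
  if (m : nat) == b then - ((Mt m)^T *m X) else 0.
Proof.
move=> b_eq; rewrite !gME b_eq; have [-> | _] := eqVneq (m : nat) a.
  rewrite (gtn_eqF (ltnSn a)) (ltn_eqF (ltnSn a)) (ltn_eqF (ltnW (ltnSn a.+1))).
  by rewrite mulmx0.
rewrite [a.+1 == _]eq_sym.
by case: eqP; rewrite ?trmx0 ?mul0mx // mulmx1 linearN mulNmx.
Qed.

End Innovation.

Variables (C : MM) (Mt Mc : nat -> 'M[R]_d).
Hypotheses (C_posdef : posdef C) (C_markov : markov_model C Mt Mc).
Local Notation G := (@blkmx R N d (gM Mt)).

Lemma markov_congr_bdiag : G *m C *m G^T = bdiag (fun k => Mc k).
Proof.
apply: blk_inj => k l; rewrite blk_blkmx -C_markov blk_mul.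
under eq_bigr => m _ do rewrite blk_tr.
under eq_bigr => m _ do rewrite blk_blkmx blk_mul mulmx_suml.
rewrite exchange_big; apply: eq_bigr => i _; apply: eq_bigr => j _.
by rewrite blk_blkmx.
Qed.

Lemma markov_noise_unit k : (k <= N)%N -> Mc k \in unitmx.
Proof.
move=> kN; have /(posdef_congr_blk_unit C_posdef) :
  blk G (inord k) (inord k) = 1%:M by rewrite blk_blkmx gME eqxx.
by rewrite markov_congr_bdiag blk_blkmx eqxx inordK.
Qed.

Lemma invmx_markov : invmx C = G^T *m bdiag (fun k => invmx (Mc k)) *m G.
Proof.
apply: invmx_congr markov_congr_bdiag _.
by apply: bdiag_mulV => k; exact: markov_noise_unit (ltn_ord k).
Qed.

Lemma blk_invmx_markov a b :
  blk (invmx C) a b = \sum_m (gM Mt m a)^T *m invmx (Mc m) *m gM Mt m b.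
Proof.
by rewrite invmx_markov blk_trmx_bdiag_mul; under eq_bigr do rewrite !blk_blkmx.
Qed.

Lemma markov_Ablk k : (k <= N)%N ->
  Ablk C k = invmx (Mc k) +
    (if (k < N)%N then (Mt k.+1)^T *m invmx (Mc k.+1) *m Mt k.+1 else 0).
Proof.
move=> kN; rewrite /Ablk blk_invmx_markov; under eq_bigr do rewrite gM_quad.
rewrite big_split /= -!big_mkcond (big_ord1_eq _ (fun j => invmx (Mc j))).
rewrite (big_ord1_eq _ (fun j => (Mt j)^T *m invmx (Mc j) *m Mt j)).
by rewrite inordK // !ltnS kN.
Qed.

Lemma markov_Bblk k : (k < N)%N ->
  Bblk C k = - ((Mt k.+1)^T *m invmx (Mc k.+1)).
Proof.
move=> kN; have succ_k : (inord k.+1 : 'I_N.+1) = (inord k : 'I_N.+1).+1 :> nat.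
  by rewrite !inordK // ltnW.
rewrite /Bblk blk_invmx_markov; under eq_bigr do rewrite (gM_cross _ _ _ succ_k).
rewrite -big_mkcond (big_ord1_eq _ (fun j => - ((Mt j)^T *m invmx (Mc j)))).
by rewrite inordK // ltnS kN.
Qed.

End MarkovModel.

Section TwoMarkovModels.
Variables (R : realFieldType) (N d : nat).
Variables (C1 C2 : 'M[R]_(N.+1 * d)) (Mt1 Mc1 Mt2 Mc2 : nat -> 'M[R]_d).
Hypotheses (N_gt1 : (1 < N)%N) (C1_posdef : posdef C1) (C2_posdef : posdef C2).
Hypotheses (C1_markov : markov_model C1 Mt1 Mc1)
           (C2_markov : markov_model C2 Mt2 Mc2).
Hypothesis same_rec : same_reciprocal C1 C2.

Lemma same_reciprocal_Bblk k : (k < N)%N -> Bblk C1 k = Bblk C2 k.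
Proof.
case: k => [|k] kN.
  have /same_rec[_ + _] : (1 <= 1 <= N.-1)%N by lia.
  by rewrite /Rminus => /oppr_inj/trmx_inj.
have /same_rec[_ _ Rplus_eq] : (1 <= k.+1 <= N.-1)%N by lia.
exact: oppr_inj Rplus_eq.
Qed.

Lemma same_markov_Mt k : (k < N)%N -> Mc1 k.+1 = Mc2 k.+1 -> Mt1 k.+1 = Mt2 k.+1.
Proof.
move=> kN Mc_eq; have := same_reciprocal_Bblk kN.
rewrite (markov_Bblk C1_posdef C1_markov kN) (markov_Bblk C2_posdef C2_markov kN).
rewrite Mc_eq => /oppr_inj/(congr1 (mulmx^~ (Mc2 k.+1))) /=.
by rewrite !mulmxKV ?(markov_noise_unit C2_posdef C2_markov kN) // => /trmx_inj.
Qed.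

Lemma same_markov_Mc k : (0 < k < N)%N -> Mc1 k.+1 = Mc2 k.+1 -> Mc1 k = Mc2 k.
Proof.
move=> /andP[k_gt0 kN] Mc_eq; have /same_rec[+ _ _] : (1 <= k <= N.-1)%N by lia.
rewrite /R0 (markov_Ablk C1_posdef C1_markov (ltnW kN)).
rewrite (markov_Ablk C2_posdef C2_markov (ltnW kN)) kN.
by rewrite (same_markov_Mt kN Mc_eq) Mc_eq => /addIr/(can_inj invmxK).
Qed.

Lemma same_markov_last : same_markov N Mt1 Mc1 Mt2 Mc2 <-> Mc1 N = Mc2 N.
Proof.
split=> [same | McN_eq].
  by have /same[_ ->] : (1 <= N <= N)%N by lia.
have Mc_eq j : (j < N)%N -> Mc1 (N - j) = Mc2 (N - j).
  elim: j => [|j IH] jN; first by rewrite subn0.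
  have N_j : (N - j = (N - j.+1).+1)%N by lia.
  by apply: same_markov_Mc; [lia | rewrite -N_j IH // ltnW].
move=> k /andP[k_gt0 kN]; have k_pred : k = k.-1.+1 by lia.
have Mck : Mc1 k = Mc2 k by have := Mc_eq (N - k)%N; rewrite subKn //; apply; lia.
split=> //; rewrite k_pred; apply: same_markov_Mt; [lia | by rewrite -k_pred].
Qed.

End TwoMarkovModels.

Theorem proposition6 (R : realFieldType) (N d : nat)
  (C1 C2 : 'M[R]_(N.+1 * d)) (Mt1 Mc1 Mt2 Mc2 : nat -> 'M[R]_d) :
  (1 < N)%N ->
  posdef C1 -> posdef C2 ->
  markov_model C1 Mt1 Mc1 -> markov_model C2 Mt2 Mc2 ->
  same_reciprocal C1 C2 ->
  (same_markov N Mt1 Mc1 Mt2 Mc2 <-> R0 C1 N = R0 C2 N) /\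
  (same_markov N Mt1 Mc1 Mt2 Mc2 <-> Mc1 N = Mc2 N).
Proof.
move=> N_gt1 C1_posdef C2_posdef C1_markov C2_markov same_rec.
have same_last :=
  same_markov_last N_gt1 C1_posdef C2_posdef C1_markov C2_markov same_rec.
split=> //; rewrite same_last /R0.
rewrite (markov_Ablk C1_posdef C1_markov (leqnn N)).
rewrite (markov_Ablk C2_posdef C2_markov (leqnn N)) ltnn !addr0.
by split=> [-> // | /(can_inj invmxK)].
Qed.
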